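(* Let $\mathbb{T}^1$ be the one-dimensional connected compact torus (circle), equipped with a bi-invariant metric $d$ and Haar probability measure $\mu$. Let $\phi$ be a positive function on $\mathbb{T}^1$ and $\bar\phi=\int_{\mathbb{T}^1}\phi\circ g\,d\mu(g)$ its $\mathbb{T}^1$-average, regarded as a constant function. Assume $e^{-\kappa}\bar\phi\le\phi$. Then $$d_L(\phi\cdot\mu,\bar\phi\cdot\mu)\le\kappa\,\mathrm{diam}(\mathbb{T}^1).$$
   Context: The Lévy–Prokhorov distance between measures $\mu_1,\mu_2$ on a metric space is $d_L(\mu_1,\mu_2)=\inf\{\varepsilon>0:\ \mu_2(A_\varepsilon)\ge\mu_1(A)\ \text{for all subsets } A\}$, with $A_\varepsilon$ the $\varepsilon$-neighborhood of $A$. *)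

(* The circle T^1 is modelled as R/Z, represented
   by the fundamental domain [0,1[ of R; Haar probability measure = Lebesgue
   measure restricted to [0,1[ ; the bi-invariant (Riemannian) metric is
   c times the arc-length distance, c > 0 an arbitrary scale. *)
From HB Require Import structures.
From mathcomp Require Import all_boot all_order all_algebra.
From mathcomp Require Import all_classical all_reals all_analysis.
Set Implicit Arguments. Unset Strict Implicit. Unset Printing Implicit Defensive.
Import Order.TTheory GRing.Theory Num.Theory.
Import numFieldNormedType.Exports.
Local Open Scope classical_set_scope.
Local Open Scope ring_scope.

Section circle.
Variable R : realType.

Definition circle : set R := `[0%R, 1%R[%classic.

Definition circ_dist (c : R) (x y : R) : R :=
  c * Num.min `|x - y| (1 - `|x - y|).

Definition circ_diam (c : R) : R :=
  sup [set circ_dist c xy.1 xy.2 | xy in circle `*` circle].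

Definition circ_nbhd (c : R) (A : set R) (e : R) : set R :=
  [set y | circle y /\ exists2 x, A x & circ_dist c x y < e].

Definition wmeas (phi : R -> R) (A : set R) : \bar R :=
  (\int[@lebesgue_measure R]_(x in A) (phi x)%:E)%E.

Definition circ_avg (phi : R -> R) : R :=
  fine (\int[@lebesgue_measure R]_(x in circle) (phi x)%:E)%E.

Definition levy_prokhorov (c : R) (mu1 mu2 : set R -> \bar R) : \bar R :=
  ereal_inf [set e%:E | e in [set e : R | 0 < e /\
     forall A : set R, measurable A -> A `<=` circle ->
       (mu1 A <= mu2 (circ_nbhd c A e))%E]].

End circle.

(* Since phi >= e^-kappa avg, the complement of A carries phi-mass at least
   e^-kappa avg (1 - mu A), hence (phi.mu)(A) <= avg (mu A + 1 - e^-kappa)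
   <= avg (mu A + kappa).  If the e-neighbourhood A_e is not the whole circle,
   rotating a point outside A_e to 0 puts A inside [r, 1 - r], r = e / c, and
   the two arcs of length r beyond the extremities of the rotated A lie in
   A_e \ A, so mu A_e >= mu A + 2 r.  Hence for e > kappa c / 2 both bounds
   combine into (phi.mu)(A) <= avg mu(A_e), and kappa c / 2 <= kappa diam. *)

From HB Require Import structures.
From mathcomp Require Import all_boot all_order all_algebra.
From mathcomp Require Import all_classical all_reals all_analysis.
From mathcomp Require Import measurable_realfun lra.
Set Implicit Arguments. Unset Strict Implicit. Unset Printing Implicit Defensive.
Import Order.TTheory GRing.Theory Num.Theory.
Local Open Scope classical_set_scope.
Local Open Scope ring_scope.

Section arc_distance.
Variable R : realType.
Implicit Types p u x y z : R.

Lemma circleP x : circle x <-> 0 <= x < 1.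
Proof. by rewrite /circle /= in_itv. Qed.

Definition arcnorm u : R := Num.min `|u| (1 - `|u|).

Lemma circ_distE c x y : circ_dist c x y = c * arcnorm (x - y).
Proof. by []. Qed.

Lemma arcnorm_le_norm u : arcnorm u <= `|u|.
Proof. by rewrite ge_min lexx. Qed.

Lemma arcnorm0 : arcnorm 0 = 0.
Proof. by rewrite /arcnorm normr0 subr0 /Order.min ltr01. Qed.

Lemma arcnormD1 u : -1 <= u <= 0 -> arcnorm (u + 1) = arcnorm u.
Proof.
move=> /andP[u1 u0]; rewrite /arcnorm (ler0_norm u0) (@ger0_norm _ (u + 1)); last lra.
by rewrite minC; congr Num.min; lra.
Qed.

Lemma arcnorm_lipschitz u v : arcnorm u <= arcnorm v + `|u - v|.
Proof.
have := lerB_dist u v; have := lerB_dist v u; rewrite distrC /arcnorm => h1 h2.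
rewrite -lerBlDr le_min !lerBlDr !ge_min.
by apply/andP; split; apply/orP; [left | right]; lra.
Qed.

Definition rot p x : R := if p <= x then x - p else x - p + 1.

Lemma rot_circle p x : circle p -> circle x -> circle (rot p x).
Proof.
by move=> /circleP/andP[p0 p1] /circleP/andP[x0 x1]; apply/circleP;
  rewrite /rot; case: ifP => h; apply/andP; split; lra.
Qed.

Lemma rotpp p : rot p p = 0.
Proof. by rewrite /rot lexx subrr. Qed.

Lemma arcnorm_rot p x y : circle p -> circle x -> circle y ->
  arcnorm (rot p x - rot p y) = arcnorm (x - y).
Proof.
move=> /circleP/andP[p0 p1] /circleP/andP[x0 x1] /circleP/andP[y0 y1].
rewrite /rot; case: ifP => px; case: ifP => py.
- by congr arcnorm; lra.
- rewrite -[x - y](subrK 1) arcnormD1; first by congr arcnorm; lra.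
  by apply/andP; split; lra.
- rewrite -(arcnormD1 (u := x - y)); first by congr arcnorm; lra.
  by apply/andP; split; lra.
- by congr arcnorm; lra.
Qed.

Definition rot_arc p a b : set R := [set y | circle y /\ a < rot p y < b].

Lemma rot_arc_measurable_length p a b : circle p -> 0 <= a < b -> b <= 1 ->
  measurable (rot_arc p a b) /\ lebesgue_measure (rot_arc p a b) = (b - a)%:E.
Proof.
move=> /circleP/andP[p0 p1] /andP[a0 ab] b1.
have lebesgue_itv (i : interval R) :
    (i.1 < i.2)%E -> lebesgue_measure [set` i] = (i.2 - i.1)%E.
  by move=> lti; rewrite lebesgue_measure_itv lti.
case: (leP (p + b) 1) => pb1.
  have -> : rot_arc p a b = `]p + a, p + b[%classic.
    rewrite /rot_arc /rot; apply/seteqP; split => y /=; rewrite in_itv /=.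
      case=> /circleP/andP[y0 y1].
      by case: ifP => py /andP[H1 H2]; apply/andP; split; lra.
    move=> /andP[H1 H2]; split; first by apply/circleP/andP; split; lra.
    by case: ifP => py; apply/andP; split; lra.
  split; first exact: measurable_itv.
  by rewrite lebesgue_itv /= ?lte_fin -?EFinD; [congr EFin; lra | lra].
case: (leP 1 (p + a)) => pa1.
  have -> : rot_arc p a b = `]p + a - 1, p + b - 1[%classic.
    rewrite /rot_arc /rot; apply/seteqP; split => y /=; rewrite in_itv /=.
      case=> /circleP/andP[y0 y1].
      by case: ifP => py /andP[H1 H2]; apply/andP; split; lra.
    move=> /andP[H1 H2]; split; first by apply/circleP/andP; split; lra.
    by case: ifP => py; apply/andP; split; lra.
  split; first exact: measurable_itv.
  by rewrite lebesgue_itv /= ?lte_fin -?EFinD; [congr EFin; lra | lra].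
have -> : rot_arc p a b = `]p + a, 1[%classic `|` `[0, p + b - 1[%classic.
  rewrite /rot_arc /rot; apply/seteqP; split => y /=; rewrite !in_itv /=.
    case=> /circleP/andP[y0 y1]; case: ifP => py /andP[H1 H2].
      by left; apply/andP; split; lra.
    by right; apply/andP; split; lra.
  by case=> /andP[H1 H2]; (split; first by apply/circleP/andP; split; lra);
    case: ifP => py; apply/andP; split; lra.
split; first by apply: measurableU; exact: measurable_itv.
rewrite measureU; [|exact: measurable_itv|exact: measurable_itv|].
  rewrite (_ : b - a = (1 - (p + a)) + (p + b - 1 - 0)) ?EFinD; last lra.
  by congr (_ + _)%E; apply: lebesgue_itv; rewrite /= lte_fin; lra.
by apply/seteqP; split => y //=; rewrite !in_itv /= => -[/andP[? ?] /andP[? ?]]; lra.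
Qed.

End arc_distance.

Section circle_neighbourhood.
Variables (R : realType) (c e : R) (A : set R).
Hypotheses (c0 : 0 < c) (e0 : 0 < e).

Lemma measurable_circ_nbhd : measurable (circ_nbhd c A e).
Proof.
have -> : circ_nbhd c A e = @circle R `&` [set y | exists2 x, A x & circ_dist c x y < e].
  by apply/seteqP; split => y [].
apply: measurableI; first exact: measurable_itv.
apply: open_measurable; rewrite openE => y [x Ax xy]; rewrite /interior /=.
apply/nbhs_ballP; exists ((e - circ_dist c x y) / c) => /=.
  by rewrite divr_gt0 // subr_gt0.
move=> z; rewrite /ball_ /= ltr_pdivlMr // => yz; exists x => //.
have := ler_wpM2l (ltW c0) (arcnorm_lipschitz (x - z) (x - y)).
rewrite !circ_distE (_ : x - z - (x - y) = y - z) in xy yz * => [|]; last lra.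
rewrite mulrDr; rewrite mulrC in yz.
lra.
Qed.

Lemma sub_circ_nbhd : A `<=` @circle R -> A `<=` circ_nbhd c A e.
Proof.
move=> Asub x Ax; split; first exact: Asub.
by exists x; rewrite // circ_distE subrr arcnorm0 mulr0.
Qed.

End circle_neighbourhood.

Section circle_neighbourhood_measure.
Variables (R : realType) (c e : R) (A : set R) (p : R).
Hypotheses (c0 : 0 < c) (e0 : 0 < e) (mA : measurable A) (Asub : A `<=` @circle R).
Hypotheses (Cp : circle p) (Np : ~ circ_nbhd c A e p).

Lemma rot_far_from_nbhd x : A x -> e / c <= rot p x <= 1 - e / c.
Proof.
move=> Ax; have Cx := Asub Ax.
have /negP : ~ circ_dist c x p < e by move=> xp; apply: Np; split => //; exists x.
rewrite circ_distE -(arcnorm_rot Cp Cx Cp) rotpp subr0 -leNgt -ler_pdivrMl //.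
have /circleP/andP[rx0 _] := rot_circle Cp Cx.
by rewrite /arcnorm ger0_norm // le_min => /andP[? ?]; apply/andP; split; lra.
Qed.

Lemma rot_near_in_circ_nbhd x y : A x -> circle y ->
  `|rot p x - rot p y| < e / c -> circ_nbhd c A e y.
Proof.
move=> Ax Cy xy; split => //; exists x => //.
rewrite circ_distE -(arcnorm_rot Cp (Asub Ax) Cy) mulrC -ltr_pdivlMr //.
exact: le_lt_trans (arcnorm_le_norm _) xy.
Qed.

Lemma rot_image_has_inf : A !=set0 -> has_inf (rot p @` A).
Proof.
move=> [x Ax]; split; first by exists (rot p x), x.
by exists 0 => _ [y Ay <-]; have /circleP/andP[] := rot_circle Cp (Asub Ay).
Qed.

Lemma rot_image_has_sup : A !=set0 -> has_sup (rot p @` A).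
Proof.
move=> [x Ax]; split; first by exists (rot p x), x.
by exists 1 => _ [y Ay <-]; have /circleP/andP[_ /ltW] := rot_circle Cp (Asub Ay).
Qed.

Lemma rot_arc_inf_sub_circ_nbhd : A !=set0 ->
  rot_arc p (inf (rot p @` A) - e / c) (inf (rot p @` A)) `<=` circ_nbhd c A e.
Proof.
move=> A0 y [Cy /andP[ya1 ya2]]; have Finf := rot_image_has_inf A0.
have ya0 : 0 < rot p y + e / c - inf (rot p @` A) by lra.
have [_ [x Ax <-] xa] := inf_adherent ya0 Finf.
have ax := ge_inf Finf.2 (ex_intro2 _ _ x Ax erefl).
apply: (rot_near_in_circ_nbhd Ax Cy).
by rewrite ltr_norml; apply/andP; split; lra.
Qed.

Lemma rot_arc_sup_sub_circ_nbhd : A !=set0 ->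
  rot_arc p (sup (rot p @` A)) (sup (rot p @` A) + e / c) `<=` circ_nbhd c A e.
Proof.
move=> A0 y [Cy /andP[yb1 yb2]]; have Fsup := rot_image_has_sup A0.
have yb0 : 0 < sup (rot p @` A) + e / c - rot p y by lra.
have [_ [x Ax <-] bx] := sup_adherent yb0 Fsup.
have xb := sup_upper_bound Fsup (ex_intro2 _ _ x Ax erefl).
apply: (rot_near_in_circ_nbhd Ax Cy).
by rewrite ltr_norml; apply/andP; split; lra.
Qed.

Lemma circ_nbhd_measure_ge : A !=set0 ->
  (lebesgue_measure A + (2 * (e / c))%:E <= lebesgue_measure (circ_nbhd c A e))%E.
Proof.
move=> A0; set r := e / c; have r0 : 0 < r by exact: divr_gt0.
have [F0 Flb] := rot_image_has_inf A0; have Fsup := rot_image_has_sup A0.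
have far x : A x -> r <= rot p x <= 1 - r by exact: rot_far_from_nbhd.
set a := inf (rot p @` A); set b := sup (rot p @` A).
have Fa x : A x -> a <= rot p x by move=> Ax; apply: ge_inf => //; exists x.
have Fb x : A x -> rot p x <= b by move=> Ax; apply: (sup_upper_bound Fsup); exists x.
have ra : r <= a by apply: lb_le_inf F0 _ => _ [x Ax <-]; case/andP: (far x Ax).
have b1r : b <= 1 - r by apply: ge_sup F0 _ => _ [x Ax <-]; case/andP: (far x Ax).
have ab : a <= b by case: A0 => x0 Ax0; exact: le_trans (Fa _ Ax0) (Fb _ Ax0).
have [mL mLE] := @rot_arc_measurable_length _ p (a - r) a Cp
  (ltac:(apply/andP; split; lra)) (ltac:(lra)).
have [mR mRE] := @rot_arc_measurable_length _ p b (b + r) Cp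
  (ltac:(apply/andP; split; lra)) (ltac:(lra)).
set L := rot_arc p (a - r) a in mL mLE; set Rr := rot_arc p b (b + r) in mR mRE.
have sub : A `|` L `|` Rr `<=` circ_nbhd c A e.
  move=> y [[Ay | Ly] | Ry]; first exact: sub_circ_nbhd.
  - exact: rot_arc_inf_sub_circ_nbhd.
  - exact: rot_arc_sup_sub_circ_nbhd.
have AL0 : A `&` L = set0.
  by apply/seteqP; split => // y [Ay [_ /andP[_ ya]]]; have := Fa y Ay; lra.
have ALR0 : (A `|` L) `&` Rr = set0.
  apply/seteqP; split => // y [[Ay | [_ /andP[_ ya]]] [_ /andP[yb _]]]; last lra.
  by have := Fb y Ay; lra.
have -> : (lebesgue_measure A + (2 * r)%:E = lebesgue_measure (A `|` L `|` Rr))%E.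
  (* [measureU] speaks of the content structure of [lebesgue_measure], which
     [rewrite] does not match syntactically with [lebesgue_measure] itself. *)
  transitivity (lebesgue_measure A + lebesgue_measure L + lebesgue_measure Rr)%E.
    by rewrite mLE mRE -addeA -EFinD; congr (_ + _%:E); lra.
  by rewrite measureU ?measureU //; exact: measurableU.
apply: le_measure => //; rewrite inE //; last exact: measurable_circ_nbhd.
by apply: measurableU => //; exact: measurableU.
Qed.

End circle_neighbourhood_measure.

Lemma integral_gt0 d (T : measurableType d) (R : realType)
    (mu : {measure set T -> \bar R}) (D : set T) (f : T -> R) :
  measurable D -> (0 < mu D)%E -> mu.-integrable D (EFin \o f) ->
  (forall x, D x -> 0 < f x) -> (0 < \int[mu]_(x in D) (f x)%:E)%E.
Proof.
move=> mD muD fint fgt0.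
have f0 x : D x -> (0 <= (f x)%:E)%E by move=> Dx; rewrite lee_fin ltW ?fgt0.
rewrite lt0e integral_ge0 // andbT; apply/eqP => I0.
have absI0 : (\int[mu]_(x in D) `|(f x)%:E| = 0)%E.
  by rewrite -I0; apply: eq_integral => x /[!inE] Dx; rewrite gee0_abs ?f0.
have [N [mN N0 DN]] := (ae_eq_integral_abs mu mD (measurable_int _ fint)).1 absI0.
suff : (mu D <= mu N)%E by rewrite N0 leNgt muD.
apply: le_measure; rewrite ?inE // => x Dx; apply: DN => /(_ Dx) /= [].
by apply/eqP; rewrite gt_eqF ?fgt0.
Qed.

Lemma lebesgue_circle (R : realType) : lebesgue_measure (@circle R) = 1%:E.
Proof. by rewrite /circle lebesgue_measure_itv /= lte_fin ltr01 -EFinD subr0. Qed.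

Lemma lebesgue_sub_circle (R : realType) (A : set R) :
  measurable A -> A `<=` @circle R ->
  exists2 al : R, 0 <= al <= 1 & lebesgue_measure A = al%:E.
Proof.
move=> mA Asub.
have le1 : (lebesgue_measure A <= 1%:E)%E.
  by rewrite -(lebesgue_circle R) le_measure ?inE //; exact: measurable_itv.
have finA : lebesgue_measure A \is a fin_num.
  by rewrite ge0_fin_numE ?measure_ge0 // (le_lt_trans le1) ?ltry.
exists (fine (lebesgue_measure A)); last by rewrite fineK.
by rewrite -!lee_fin fineK ?measure_ge0.
Qed.

Lemma lebesgue_circleD (R : realType) (A : set R) (al : R) :
  measurable A -> A `<=` @circle R -> lebesgue_measure A = al%:E ->
  lebesgue_measure (@circle R `\` A) = (1 - al)%:E.
Proof.
move=> mA Asub alE; have mC : measurable (@circle R) by exact: measurable_itv.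
transitivity (lebesgue_measure (@circle R) - lebesgue_measure (@circle R `&` A))%E.
  rewrite measureD //; change (lebesgue_measure (@circle R) < +oo)%E.
  by rewrite lebesgue_circle ltry.
by rewrite setIidr // lebesgue_circle alE -EFinB.
Qed.

Lemma wmeas_cst (R : realType) (k : R) (S : set R) :
  measurable S -> wmeas (fun=> k) S = (k%:E * lebesgue_measure S)%E.
Proof. by move=> mS; exact: integral_cst. Qed.

Section weighted_measure.
Variables (R : realType) (phi : R -> R).
Hypothesis phi_int : lebesgue_measure.-integrable (@circle R) (EFin \o phi).
Hypothesis phi_gt0 : forall x, circle x -> 0 < phi x.

Let mC : measurable (@circle R) := measurable_itv _.

Lemma circ_avgE : (circ_avg phi)%:E = wmeas phi (@circle R).
Proof. by rewrite fineK //; exact: integrable_fin_num. Qed.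

Lemma circ_avg_gt0 : 0 < circ_avg phi.
Proof.
rewrite -lte_fin circ_avgE; apply: (integral_gt0 _ _ phi_int phi_gt0); first exact: mC.
by change (0 < lebesgue_measure (@circle R))%E; rewrite lebesgue_circle.
Qed.

Lemma wmeas_ge0 A : A `<=` @circle R -> (0 <= wmeas phi A)%E.
Proof. by move=> Asub; apply: integral_ge0 => x /Asub Cx; rewrite lee_fin ltW ?phi_gt0. Qed.

Lemma wmeas_le_avg A : measurable A -> A `<=` @circle R ->
  (wmeas phi A <= (circ_avg phi)%:E)%E.
Proof.
move=> mA Asub; rewrite circ_avgE; apply: ge0_subset_integral => //.
  exact: (measurable_int _ phi_int).
by move=> x Cx; rewrite lee_fin ltW ?phi_gt0.
Qed.

Lemma wmeas_fin_num A : measurable A -> A `<=` @circle R -> wmeas phi A \is a fin_num.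
Proof.
move=> mA Asub; rewrite ge0_fin_numE ?wmeas_ge0 //.
exact: le_lt_trans (wmeas_le_avg mA Asub) (ltry _).
Qed.

Lemma circ_avg_wmeasD A : measurable A -> A `<=` @circle R ->
  (circ_avg phi)%:E = (wmeas phi A + wmeas phi (@circle R `\` A))%E.
Proof.
move=> mA Asub; rewrite circ_avgE /wmeas -{1}(setDUK Asub).
apply: ge0_integral_setU => //; first exact: measurableD.
- by rewrite setDUK //; exact: (measurable_int _ phi_int).
- by move=> x; rewrite setDUK // => Cx; rewrite lee_fin ltW ?phi_gt0.
- by rewrite disj_set2E setDIK.
Qed.

Variable kappa : R.
Hypothesis phi_ge : forall x, circle x -> expR (- kappa) * circ_avg phi <= phi x.

Lemma lower_bound_exponent_ge0 : 0 <= kappa.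
Proof.
have : ((expR (- kappa) * circ_avg phi)%:E <= (circ_avg phi)%:E)%E.
  rewrite -[X in (X <= _)%E]mule1 -(lebesgue_circle R) -wmeas_cst // circ_avgE.
  apply: ge0_le_integral => //; last exact: (measurable_int _ phi_int).
  by move=> x _; rewrite lee_fin mulr_ge0 ?expR_ge0 ?ltW ?circ_avg_gt0.
rewrite lee_fin -[X in _ <= X]mul1r ler_pM2r ?circ_avg_gt0 // => E_le1.
by have := expR_ge1Dx (- kappa); lra.
Qed.

Lemma wmeas_le_avg_measure A : measurable A -> A `<=` @circle R ->
  (wmeas phi A <= (circ_avg phi)%:E * (lebesgue_measure A + kappa%:E))%E.
Proof.
move=> mA Asub; set ph := circ_avg phi.
have ph0 : 0 < ph := circ_avg_gt0.
have kappa0 := lower_bound_exponent_ge0.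
have [al al01 alE] := lebesgue_sub_circle mA Asub.
have mCA : measurable (@circle R `\` A) by exact: measurableD.
have /fineK iAE := wmeas_fin_num mA Asub.
have /fineK iCE := wmeas_fin_num mCA (@subDsetl _ _ _).
set iA := fine (wmeas phi A) in iAE; set iC := fine _ in iCE.
have phE : ph = iA + iC by apply: EFin_inj; rewrite EFinD iAE iCE (circ_avg_wmeasD mA Asub).
have iClow : expR (- kappa) * ph * (1 - al) <= iC.
  rewrite -lee_fin EFinM -(lebesgue_circleD mA Asub alE) -wmeas_cst // iCE.
  apply: ge0_le_integral => //.
  - by move=> x _; rewrite lee_fin mulr_ge0 ?expR_ge0 ?ltW.
  - exact: measurable_funS (measurable_int _ phi_int).
  - by move=> x [Cx _]; rewrite lee_fin phi_ge.
rewrite -iAE alE -EFinD -EFinM lee_fin.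
have := expR_ge1Dx (- kappa); set E := expR (- kappa) in iClow * => E_ge.
have s1 : ph * (1 - al) * (1 - E) <= ph * (1 - al) * kappa.
  by apply: ler_wpM2l; [apply: mulr_ge0; lra | lra].
have s2 : ph * (1 - al) * kappa <= ph * kappa.
  by rewrite mulrAC ler_piMr ?mulr_ge0 ?(ltW ph0) //; lra.
lra.
Qed.

Lemma wmeas_le_avg_circ_nbhd c e A : 0 < c -> kappa * c / 2 < e ->
  measurable A -> A `<=` @circle R ->
  (wmeas phi A <= wmeas (fun=> circ_avg phi) (circ_nbhd c A e))%E.
Proof.
move=> c0 ke mA Asub.
have ph0 := circ_avg_gt0.
have e0 : 0 < e by have := mulr_ge0 lower_bound_exponent_ge0 (ltW c0); lra.
rewrite wmeas_cst; last exact: measurable_circ_nbhd.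
case: (pselect (A = set0)) => [->|/eqP/set0P A0].
  rewrite /wmeas integral_set0; apply: mule_ge0; last exact: measure_ge0.
  by rewrite lee_fin ltW.
case: (pselect (exists2 p, circle p & ~ circ_nbhd c A e p)) => [[p Cp Np]|full].
  apply: le_trans (wmeas_le_avg_measure mA Asub) (lee_wpmul2l _ _).
    by rewrite lee_fin ltW.
  apply: le_trans (circ_nbhd_measure_ge c0 e0 mA Asub Cp Np A0).
  by apply: leeD => //; rewrite lee_fin mulrA ler_pdivlMr //; lra.
have -> : circ_nbhd c A e = @circle R.
  apply/seteqP; split => [y [] //|y Cy].
  by apply: contrapT => Ny; apply: full; exists y.
by rewrite lebesgue_circle mule1 wmeas_le_avg.
Qed.

End weighted_measure.

Lemma circ_diam_ge (R : realType) (c : R) : 0 <= c -> c / 2 <= circ_diam c.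
Proof.
move=> c0; apply: sup_upper_bound; last first.
  exists (1 / 2, 0); first by split; apply/circleP/andP; split => /=; lra.
  rewrite circ_distE /arcnorm /= subr0 ger0_norm; last lra.
  by rewrite (_ : 1 - 1 / 2 = 1 / 2); [rewrite minxx mul1r | lra].
split.
  by exists (circ_dist c 0 0), (0, 0) => //; split; apply/circleP; rewrite lexx ltr01.
exists c => _ [[x y] _ <-]; rewrite circ_distE ler_piMr // ge_min.
by apply/orP; right; have := normr_ge0 (x - y); lra.
Qed.

Unset Implicit Arguments.

Theorem lemma18p0p7 (R : realType) (c : R) (hc : 0 < c)
  (phi : R -> R) (kappa : R)
  (hint : (@lebesgue_measure R).-integrable (@circle R) (EFin \o phi))
  (hpos : forall x, @circle R x -> 0 < phi x)
  (hlow : forall x, @circle R x -> expR (- kappa) * circ_avg phi <= phi x) :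
  (levy_prokhorov c (wmeas phi) (wmeas (fun _ => circ_avg phi))
     <= (kappa * circ_diam c)%:E)%E.
Proof.
have kappa0 := lower_bound_exponent_ge0 hint hpos hlow.
apply/lee_addgt0Pr => eps eps0.
apply: (@le_trans _ _ (kappa * c / 2 + eps)%:E).
  apply: ereal_inf_lbound; exists (kappa * c / 2 + eps) => //; split.
    by have := mulr_ge0 kappa0 (ltW hc); lra.
  by move=> A mA Asub; apply: (wmeas_le_avg_circ_nbhd hint hpos hlow) => //; lra.
by rewrite -EFinD lee_fin lerD2r -mulrA ler_wpM2l // circ_diam_ge // ltW.
Qed.
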